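(* Let $M=(m_{ij})$ be an $n\times n$ homogeneous, well-ordered integer matrix of degree $d$, and let $M'$ be the $(n-1)\times n$ matrix obtained from $M$ by erasing the first row. Assume there exists a zero-dimensional subscheme $Z\subset\mathbb{P}^2$ having a degree Hilbert-Burch matrix equal to $M'$. Then the Hilbert function of $Z$ in degree $d-1$ equals the degree of $Z$.
   Context: A matrix of integers is homogeneous if every $2\times2$ submatrix $\begin{pmatrix} a&b\\ c&e\end{pmatrix}$ satisfies $a+e=b+c$; the degree of a square homogeneous matrix is $\sum_i m_{i\sigma(i)}$, independent of $\sigma$. Well-ordered: for $i'>i$, $j'>j$, $m_{i'j}\le m_{ij}$ and $m_{ij'}\ge m_{ij}$. For a zero-dimensional subscheme $Z\subset\mathbb{P}^2$, a degree Hilbert-Burch (dHB) matrix of $Z$ is the integer matrix $(b_i-a_j)$ arising from a (not necessarily minimal) free resolution $0\to\bigoplus_{i=1}^{n-1}\mathcal{O}(-b_i)\xrightarrow{A}\bigoplus_{j=1}^{n}\mathcal{O}(-a_j)\to\mathcal{I}_Z\to0$, where $A=(f_{ij})$ has $\deg f_{ij}=b_i-a_j$, $b_1\ge\dots\ge b_{n-1}$, $a_1\ge\dots\ge a_n$. The Hilbert function of $Z$ is $Hf_Z(t)=\dim_{\mathbb{C}}(\mathbb{C}[x_0,x_1,x_2]/I_Z)_t$, $I_Z$ the homogeneous ideal of $Z$. *)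

From HB Require Import structures.
From Stdlib Require Import ClassicalEpsilon.
From mathcomp Require Import all_boot all_order all_algebra.
From mathcomp Require Import Rstruct complex.
From mathcomp Require Import mpoly.

Set Implicit Arguments.
Unset Strict Implicit.
Unset Printing Implicit Defensive.

Import Order.TTheory GRing.Theory Num.Theory.
Local Open Scope ring_scope.

Definition CC : Type := complex Rdefinitions.R.

Definition S : Type := {mpoly CC[3]}.

Definition homog_int (e : int) (p : S) : Prop :=
  match e with
  | Posz k => p \is k.-homog
  | Negz _ => p = 0
  end.

Definition homcomp (k : nat) (p : S) : S :=
  \sum_(m <- msupp p | mdeg m == k) p@_m *: 'X_[m].

Definition homogeneous_ideal (I : pred S) : Prop :=
  [/\ I 0,
      (forall p q, I p -> I q -> I (p + q)),
      (forall f p, I p -> I (f * p)) &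
      (forall p k, I p -> I (homcomp k p))].

(** [I] is saturated with respect to the irrelevant ideal (x_0,x_1,x_2). *)
Definition saturated (I : pred S) : Prop :=
  forall f : S,
    (exists N : nat, forall m : 'X_{1..3}, mdeg m = N -> I ('X_[m] * f)) -> I f.

(** [hf_is I t e]: the degree-[t] piece (S/I)_t has dimension [e] over C,
    i.e. there are [e] homogeneous polynomials of degree [t] linearly
    independent modulo I, and no [e.+1] such polynomials. *)
Definition indep_mod (I : pred S) (e : nat) (s : 'I_e -> S) : Prop :=
  forall c : 'I_e -> CC, I (\sum_(i < e) c i *: s i) -> forall i, c i = 0.

Definition hf_is (I : pred S) (t : int) (e : nat) : Prop :=
  (exists s : 'I_e -> S, (forall i, homog_int t (s i)) /\ indep_mod I s) /\
  (forall s : 'I_e.+1 -> S, (forall i, homog_int t (s i)) -> ~ indep_mod I s).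

Definition HF (I : pred S) (t : int) : nat :=
  epsilon (inhabits 0%N) (hf_is I t).

Definition degZ (I : pred S) : nat :=
  epsilon (inhabits 0%N)
    (fun e => exists t0 : int, forall t : int, t0 <= t -> HF I t = e).

(** [I] is the homogeneous ideal I_Z of a zero-dimensional subscheme
    Z of P^2: a proper, saturated homogeneous ideal whose Hilbert function
    is eventually constant. *)
Definition zero_dim_scheme_ideal (I : pred S) : Prop :=
  [/\ homogeneous_ideal I, saturated I, ~ I 1 &
      exists (e : nat) (t0 : int), forall t : int, t0 <= t -> HF I t = e].

(** [D] is a degree Hilbert-Burch matrix of the scheme with ideal [I]:
    D = (b_i - a_j) arising from a (not necessarily minimal) free resolution
      0 -> (+)_{i<m} O(-b_i) --A--> (+)_{j<n} O(-a_j) --g--> I_Z -> 0,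
    with deg f_ij = b_i - a_j, b and a nonincreasing.  The resolution is
    expressed on graded S-modules (via the global-sections functor Gamma_star), where it is
    equivalent to the sheaf resolution since H^1_star(O_{P^2}) = 0. *)
Definition is_dHB (I : pred S) (m n : nat) (D : 'M[int]_(m, n)) : Prop :=
  exists (a : 'I_n -> int) (b : 'I_m -> int) (g : 'I_n -> S)
         (A : 'I_m -> 'I_n -> S),
  (forall j j' : 'I_n, (j <= j')%N -> a j' <= a j) /\
      (forall i i' : 'I_m, (i <= i')%N -> b i' <= b i) /\
      (forall i j, D i j = b i - a j) /\
      (forall i j, homog_int (b i - a j) (A i j)) /\
      (forall j, homog_int (a j) (g j)) /\
      (* surjectivity onto I_Z *)
      (forall p, I p <-> exists h : 'I_n -> S, p = \sum_(j < n) h j * g j) /\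
      (* exactness in the middle (including composite = 0) *)
      (forall h : 'I_n -> S, \sum_(j < n) h j * g j = 0 <->
         exists c : 'I_m -> S, forall j, h j = \sum_(i < m) c i * A i j) /\
      (* injectivity of A *)
      (forall c : 'I_m -> S,
         (forall j, \sum_(i < m) c i * A i j = 0) -> forall i, c i = 0).

Definition homogeneous_mx (n : nat) (M : 'M[int]_n) : Prop :=
  forall i i' j j' : 'I_n, (i < i')%N -> (j < j')%N ->
    M i j + M i' j' = M i j' + M i' j.

Definition well_ordered_mx (n : nat) (M : 'M[int]_n) : Prop :=
  forall i i' j j' : 'I_n, (i < i')%N -> (j < j')%N ->
    M i' j <= M i j /\ M i j <= M i j'.

(** Degree of a square homogeneous matrix: sum_i m_{i sigma(i)}, computed
    with sigma = identity (it is independent of sigma). *)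
Definition mx_degree (n : nat) (M : 'M[int]_n) : int := \sum_(i < n) M i i.

From HB Require Import structures.
From mathcomp Require Import all_boot all_order all_algebra.
From mathcomp Require Import Rstruct complex.
From mathcomp Require Import mpoly.
From mathcomp Require Import zify ring.
From Stdlib Require Import ClassicalEpsilon.
Import Order.TTheory GRing.Theory Num.Theory.
Local Open Scope ring_scope.
Set Implicit Arguments.
Unset Strict Implicit.
Unset Printing Implicit Defensive.

(* In degree t the resolution is an exact sequence of finite-dimensional vector
   spaces, so HF(t) = N(t) - sum_j N(t - a_j) + sum_i N(t - b_i), where the number
   N(x) of monomials of degree x equals (x + 1)(x + 2)/2 as soon as x >= -2.  Hence
   2 HF(t) is a quadratic polynomial in t for t >= max(a_j, b_i) - 2, and since HF
   is eventually constant its quadratic and linear coefficients vanish: n = m + 1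
   and sum_j a_j = sum_i b_i, so HF(t) = deg Z on that whole range.  With these
   relations d = m_00 + a_0, and m_10 = b_0 - a_0 <= m_00 gives d >= b_0.  Finally
   0 <= a_0 <= b_0: otherwise column 0 of the relation matrix vanishes (or all
   generators do), I_Z is principal (or zero), and such an ideal either contains 1
   or does not have an eventually constant Hilbert function.  So d - 1 lies in the
   range where HF = deg Z. *)

Definition monomials (t : int) : seq 'X_{1..3} :=
  if t is Posz k then [seq s2m s | s : k.-tuple 'I_3 <- enum (basis 3 k)] else [::].

Definition nmonomials (t : int) : nat := size (monomials t).

Lemma mem_monomials (k : nat) m : (m \in monomials k) = (mdeg m == k).
Proof. by rewrite /= basis_cover. Qed.

Lemma uniq_monomials t : uniq (monomials t).
Proof. by case: t => //= k; apply: uniq_basis. Qed.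

Lemma nmonomials_nat (k : nat) : nmonomials k = 'C(k + 2, k).
Proof. exact: size_basis 2 k. Qed.

Lemma homog_int_coeff_eq0 t (p : S) m :
  homog_int t p -> m \notin monomials t -> p@_m = 0.
Proof.
case: t => [k|k] /= hp; last by rewrite hp mcoeff0.
by rewrite mem_monomials; apply: dhomog_nemf_coeff.
Qed.

Lemma homog_int0 t : homog_int t (0 : S).
Proof. by case: t => //= k; apply: dhomog0. Qed.

Lemma homog_intD t (p q : S) :
  homog_int t p -> homog_int t q -> homog_int t (p + q).
Proof. by case: t => [k|k] /=; [apply: dhomogD | move=> -> ->; rewrite addr0]. Qed.

Lemma homog_intZ t c (p : S) : homog_int t p -> homog_int t (c *: p).
Proof. by case: t => [k|k] /=; [apply: dhomogZ | move=> ->; rewrite scaler0]. Qed.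

Lemma homog_int_sum t (I : Type) (r : seq I) (P : pred I) (F : I -> S) :
  (forall i, P i -> homog_int t (F i)) -> homog_int t (\sum_(i <- r | P i) F i).
Proof.
move=> hF; elim/big_rec: _ => [|i x Pi hx]; first exact: homog_int0.
by apply: homog_intD => //; apply: hF.
Qed.

Lemma homog_intX t m : m \in monomials t -> homog_int t ('X_[m] : S).
Proof. by case: t => [k|k] //=; rewrite mem_monomials dhomogX. Qed.

Lemma homog_intM t u (p q : S) :
  homog_int t p -> homog_int u q -> homog_int (t + u) (p * q).
Proof.
case: t => [k|k] /=; last by move=> -> _; rewrite mul0r; apply: homog_int0.
case: u => [l|l] /=; last by move=> _ ->; rewrite mulr0; apply: homog_int0.
exact: dhomogM.
Qed.

Lemma homog_int_neg t (p : S) : t < 0 -> homog_int t p -> p = 0.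
Proof. by case: t. Qed.

Lemma homog0_polyC (p : S) : homog_int 0 p -> p = (p@_0%MM)%:MP.
Proof.
move=> hp; apply/mpolyP => m; rewrite mcoeffC.
have [->|m_neq0] := eqVneq m 0%MM; first by rewrite mulr1.
by rewrite mulr0; apply: (dhomog_nemf_coeff hp); rewrite mdeg_eq0.
Qed.

Lemma pihomogM (e k : nat) (h g : S) : g \is e.-homog ->
  pihomog mdeg k (h * g) = if (e <= k)%N then pihomog mdeg (k - e) h * g else 0.
Proof.
move=> hg; set N := maxn (msize h) k.+1.
rewrite {1}(@pihomog_partitionE _ _ mdeg N h); last by rewrite leq_maxl.
rewrite mulr_suml raddf_sum /=.
have pihomog_summand (d : 'I_N) : pihomog mdeg k (pihomog mdeg d h * g) =
    if (d + e == k)%N then pihomog mdeg d h * g else 0.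
  have hd := dhomogM (pihomogP mdeg d h) hg.
  by case: eqP => [<-|ne]; [apply: pihomog_dE | apply: (pihomog_ne0 _ hd); apply/eqP].
rewrite (eq_bigr _ (fun d _ => pihomog_summand d)).
case: leqP => hek; last by rewrite big1 // => d _; case: eqP => //; lia.
have hk : (k - e < N)%N by rewrite /N; lia.
rewrite (bigD1 (Ordinal hk)) //= subnK // eqxx big1 ?addr0 // => d hd.
case: eqP => // hdk; case/eqP: hd; apply: val_inj => /=; lia.
Qed.

Definition hcomp (t : int) (p : S) : S :=
  if t is Posz k then pihomog mdeg k p else 0.

Lemma hcomp_id t p : homog_int t p -> hcomp t p = p.
Proof. by case: t => [k|k] /= hp; [apply: pihomog_dE | rewrite hp]. Qed.

Lemma homog_hcomp t p : homog_int t (hcomp t p).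
Proof. by case: t => [k|k] //=; apply: pihomogP. Qed.

Lemma hcomp_sum t (I : Type) (r : seq I) (P : pred I) (F : I -> S) :
  hcomp t (\sum_(i <- r | P i) F i) = \sum_(i <- r | P i) hcomp t (F i).
Proof. by case: t => [k|k] /=; [rewrite raddf_sum | rewrite big1]. Qed.

Lemma hcompM t e (h g : S) : homog_int e g -> hcomp (t + e) (h * g) = hcomp t h * g.
Proof.
case: e => [e|e] /= hg; last by rewrite hg !mulr0; case: (t + _) => //= k; rewrite raddf0.
case: t => [k|k].
  by rewrite -PoszD /= (pihomogM _ _ hg) leq_addl addnK.
case E: (Negz k + e) => [l|l] /=; last by rewrite mul0r.
rewrite (pihomogM _ _ hg) mul0r; case: leqP => // hel.
by move: E; rewrite NegzE; lia.
Qed.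

(* The space of tuples (h_j) with h_j a form of degree [e j] is identified with
   [CC^ncoords], one coordinate for each pair (j, m) with [mdeg m = e j]. *)
Section FormCoordinates.
Variables (n : nat) (e : 'I_n -> int).

Definition coord_keys : seq ('I_n * 'X_{1..3}) :=
  [seq (j, m) | j <- enum 'I_n, m <- monomials (e j)].

Definition ncoords : nat := size coord_keys.

Definition coord_key (i : 'I_ncoords) := tnth (in_tuple coord_keys) i.

Lemma mem_coord_keys x : (x \in coord_keys) = (x.2 \in monomials (e x.1)).
Proof.
apply/allpairsPdep/idP => [[j [m [_ hm ->]]] //|hx].
by exists x.1, x.2; split => //; [rewrite mem_enum | case: x {hx}].
Qed.

Lemma coord_key_inj : injective coord_key.
Proof.
apply/tuple_uniqP/allpairs_uniq_dep; first exact: enum_uniq.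
  by move=> j _; apply: uniq_monomials.
by move=> [j1 m1] [j2 m2] _ _ /= [-> ->].
Qed.

Lemma coord_keyP x : x \in coord_keys -> exists i, coord_key i = x.
Proof.
move=> hx; have hi : (index x coord_keys < ncoords)%N by rewrite index_mem.
by exists (Ordinal hi); rewrite /coord_key (tnth_nth x) nth_index.
Qed.

Lemma coord_key_monomial i : (coord_key i).2 \in monomials (e (coord_key i).1).
Proof. by rewrite -mem_coord_keys mem_tnth. Qed.

Lemma ncoordsE : ncoords = (\sum_j nmonomials (e j))%N.
Proof. by rewrite /ncoords size_allpairs_dep sumnE big_map big_enum. Qed.

Definition forms_of_row (v : 'rV[CC]_ncoords) (j : 'I_n) : S :=
  \sum_(i < ncoords | (coord_key i).1 == j) v 0 i *: 'X_[(coord_key i).2].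

Definition coords (h : 'I_n -> S) : 'rV[CC]_ncoords :=
  \row_i (h (coord_key i).1)@_((coord_key i).2).

Lemma homog_forms_of_row v j : homog_int (e j) (forms_of_row v j).
Proof.
apply: homog_int_sum => i /eqP <-; apply/homog_intZ/homog_intX.
exact: coord_key_monomial.
Qed.

Lemma forms_of_rowK : cancel forms_of_row coords.
Proof.
move=> v; apply/rowP => i; rewrite mxE raddf_sum (bigD1 i) //=.
rewrite mcoeffZ mcoeffX eqxx mulr1 big1 ?addr0 // => i' /andP [/eqP ei' i'i].
rewrite mcoeffZ mcoeffX; case: eqP => [em|_]; last by rewrite mulr0.
by case/eqP: i'i; apply: coord_key_inj; move: ei' em; case: (coord_key i') => ? ? /= -> ->; case: (coord_key i).
Qed.

Lemma coords_inj h1 h2 :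
  (forall j, homog_int (e j) (h1 j)) -> (forall j, homog_int (e j) (h2 j)) ->
  coords h1 = coords h2 -> h1 =1 h2.
Proof.
move=> hh1 hh2 E j; apply/mpolyP => m.
have [hm|hm] := boolP (m \in monomials (e j)); last first.
  by rewrite (homog_int_coeff_eq0 (hh1 j) hm) (homog_int_coeff_eq0 (hh2 j) hm).
have [i ki] : exists i, coord_key i = (j, m) by apply: coord_keyP; rewrite mem_coord_keys.
by move/rowP: E => /(_ i); rewrite !mxE ki.
Qed.

Lemma coordsK h : (forall j, homog_int (e j) (h j)) -> forms_of_row (coords h) =1 h.
Proof. by move=> hh; apply: coords_inj => //; [apply: homog_forms_of_row | rewrite forms_of_rowK]. Qed.

Lemma eq_coords h1 h2 : h1 =1 h2 -> coords h1 = coords h2.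
Proof. by move=> E; apply/rowP => i; rewrite !mxE E. Qed.

Lemma coords0 : coords (fun _ => 0) = 0.
Proof. by apply/rowP => i; rewrite !mxE mcoeff0. Qed.

Lemma forms_of_row_sum v j :
  forms_of_row v j = \sum_i v 0 i *: forms_of_row (delta_mx 0 i) j.
Proof.
have forms_of_delta i : forms_of_row (delta_mx 0 i) j =
    if (coord_key i).1 == j then 'X_[(coord_key i).2] else 0.
  rewrite /forms_of_row (eq_bigr (fun i' => (i' == i)%:R *: 'X_[(coord_key i').2])); last first.
    by move=> i' _; rewrite mxE eqxx.
  rewrite big_mkcond (bigD1 i) //= eqxx scale1r big1 ?addr0; first by case: ifP.
  by move=> i' /negbTE ->; rewrite scale0r; case: ifP.
rewrite {1}/forms_of_row big_mkcond; apply: eq_bigr => i _; rewrite forms_of_delta.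
by case: ifP => //; rewrite scaler0.
Qed.

End FormCoordinates.

Arguments coord_key {n} e i.
Arguments forms_of_row {n} e v j.

Definition mul_forms n n' (h : 'I_n -> S) (K : 'I_n -> 'I_n' -> S) (l : 'I_n') : S :=
  \sum_j h j * K j l.

Section FormsMatrix.
Variables (n n' : nat) (e : 'I_n -> int) (e' : 'I_n' -> int) (K : 'I_n -> 'I_n' -> S).

Definition forms_mx : 'M[CC]_(ncoords e, ncoords e') :=
  \matrix_(i, l) coords e' (mul_forms (forms_of_row e (delta_mx 0 i)) K) 0 l.

Lemma mul_forms_row v l : mul_forms (forms_of_row e v) K l =
  \sum_i v 0 i *: mul_forms (forms_of_row e (delta_mx 0 i)) K l.
Proof.
rewrite /mul_forms; under eq_bigr do rewrite forms_of_row_sum mulr_suml.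
rewrite exchange_big; apply: eq_bigr => i _; rewrite scaler_sumr.
by apply: eq_bigr => j _; rewrite scalerAl.
Qed.

Lemma mul_row_forms_mx v : v *m forms_mx = coords e' (mul_forms (forms_of_row e v) K).
Proof.
apply/rowP => l; rewrite !mxE mul_forms_row raddf_sum.
by apply: eq_bigr => i _; rewrite /= mcoeffZ !mxE.
Qed.

Hypothesis homog_K : forall j l, homog_int (e' l - e j) (K j l).

Lemma homog_mul_forms h : (forall j, homog_int (e j) (h j)) ->
  forall l, homog_int (e' l) (mul_forms h K l).
Proof.
move=> hh l; apply: homog_int_sum => j _.
by rewrite -(subrK (e j) (e' l)) addrC; apply: homog_intM.
Qed.

Lemma mul_forms_hcomp h f : (forall l, homog_int (e' l) (f l)) ->
  mul_forms h K =1 f -> mul_forms (fun j => hcomp (e j) (h j)) K =1 f.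
Proof.
move=> hf E l; rewrite -(hcomp_id (hf l)) -E /mul_forms hcomp_sum.
apply: eq_bigr => j _.
by rewrite -{1}(subrK (e j) (e' l)) addrC hcompM.
Qed.

End FormsMatrix.

Lemma hf_is_unique I t e1 e2 : hf_is I t e1 -> hf_is I t e2 -> e1 = e2.
Proof.
wlog lt_e12 : e1 e2 / (e1 < e2)%N.
  move=> H h1 h2; case: (ltngtP e1 e2) => [lt|lt|->] //; first exact: H.
  exact/esym/H.
move=> [_ no_indep] [[s [hs indep]] _]; exfalso.
apply: (no_indep (fun i => s (widen_ord lt_e12 i))) => [i|c hc]; first exact: hs.
pose c' (j : 'I_e2) := if (j < e1.+1)%N then c (inord j) else 0.
have c'E (i : 'I_e1.+1) : c' (widen_ord lt_e12 i) = c i.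
  by rewrite /c' /= ltn_ord; congr c; apply: val_inj; rewrite /= inordK.
have sumE : \sum_(j < e2) c' j *: s j = \sum_(i < e1.+1) c i *: s (widen_ord lt_e12 i).
  rewrite (bigID (fun j : 'I_e2 => (j < e1.+1)%N)) /= [X in _ + X]big1 ?addr0; last first.
    by move=> j /negbTE hj; rewrite /c' hj scale0r.
  by rewrite (big_ord_narrow lt_e12); apply: eq_bigr => i _; rewrite c'E.
by move=> i; rewrite -c'E; apply: indep; rewrite sumE.
Qed.

Lemma HF_hf_is I t e : hf_is I t e -> HF I t = e.
Proof.
move=> he; apply: (hf_is_unique _ he).
by apply: (epsilon_spec (inhabits 0%N) (hf_is I t)); exists e.
Qed.

Section HilbertFunctionRank.
Variables (I : pred S) (t : int).
Local Notation et := (fun _ : 'I_1 => t).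

Definition coords1 (p : S) : 'rV[CC]_(ncoords et) := coords et (fun _ => p).

Definition form_of_row (u : 'rV[CC]_(ncoords et)) : S := forms_of_row et u ord0.

Lemma form_of_rowK : cancel form_of_row coords1.
Proof.
move=> u; rewrite -[RHS](forms_of_rowK u); apply: eq_coords => j.
by rewrite ord1.
Qed.

Lemma coords1_sum k (c : 'I_k -> CC) (s : 'I_k -> S) :
  coords1 (\sum_i c i *: s i) = \sum_i c i *: coords1 (s i).
Proof.
apply/rowP => i; rewrite mxE summxE raddf_sum.
by apply: eq_bigr => j _; rewrite /= mcoeffZ !mxE.
Qed.

Variables (r : nat) (W : 'M[CC]_(r, ncoords et)).
Hypothesis idealE : forall p, homog_int t p -> I p <-> (coords1 p <= W)%MS.

Lemma hf_is_rank_compl : hf_is I t (\rank (W^C)%MS).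
Proof.
split.
  set B := row_base (W^C)%MS; exists (fun i => form_of_row (row i B)).
  split=> [i|c]; first exact: homog_forms_of_row.
  have hs : homog_int t (\sum_i c i *: form_of_row (row i B)).
    by apply: homog_int_sum => i _; apply/homog_intZ/homog_forms_of_row.
  move/(idealE hs); rewrite coords1_sum.
  under eq_bigr do rewrite form_of_rowK.
  have -> : \sum_i c i *: row i B = (\row_i c i) *m B.
    by rewrite mulmx_sum_row; apply: eq_bigr => i _; rewrite mxE.
  move=> cB_W; have cB_C : ((\row_i c i) *m B <= W^C)%MS.
    by apply: mulmx_sub; rewrite /B eq_row_base.
  have : ((\row_i c i) *m B <= W :&: W^C)%MS by rewrite sub_capmx cB_W cB_C.
  rewrite capmx_compl submx0 -(mul0mx _ B) => /eqP/(row_free_inj (row_base_free _)).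
  by move/rowP=> c0 i; move: (c0 i); rewrite !mxE.
move=> s hs indep; set Ms := \matrix_i coords1 (s i).
have Ms_indep (c : 'rV_(\rank (W^C)%MS).+1) : (c *m Ms <= W)%MS -> c = 0.
  rewrite mulmx_sum_row; under eq_bigr do rewrite rowK.
  rewrite -coords1_sum -idealE; last by apply: homog_int_sum => i _; apply: homog_intZ.
  by move/indep => c0; apply/rowP => i; rewrite c0 mxE.
have Ms_free : row_free Ms.
  by apply: inj_row_free => c cMs0; apply: Ms_indep; rewrite cMs0 sub0mx.
have capMsW : (Ms :&: W)%MS == 0.
  apply/rowV0P => v hv.
  have /submxP [c vE] : (v <= Ms)%MS by apply: submx_trans hv (capmxSl _ _).
  rewrite vE (Ms_indep c) ?mul0mx // -vE.
  exact: submx_trans hv (capmxSr _ _).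
have := mxrank_sum_cap Ms W; rewrite (eqP capMsW) mxrank0 addn0 (eqP Ms_free).
have := rank_leq_col (Ms + W)%MS; have := mxrank_compl W; lia.
Qed.

End HilbertFunctionRank.

(** * The Hilbert function of a graded free resolution *)

Definition graded_resolution (I : pred S) m n (a : 'I_n -> int) (b : 'I_m -> int)
    (g : 'I_n -> S) (A : 'I_m -> 'I_n -> S) : Prop :=
  [/\ (forall i j, homog_int (b i - a j) (A i j)),
      (forall j, homog_int (a j) (g j)),
      (forall p, I p <-> exists h : 'I_n -> S, p = \sum_j h j * g j),
      (forall h : 'I_n -> S, \sum_j h j * g j = 0 <->
         exists c : 'I_m -> S, forall j, h j = \sum_i c i * A i j) &
      (forall c : 'I_m -> S, (forall j, \sum_i c i * A i j = 0) -> forall i, c i = 0)].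

Section ResolutionInDegree.
Variables (I : pred S) (m n : nat) (a : 'I_n -> int) (b : 'I_m -> int).
Variables (g : 'I_n -> S) (A : 'I_m -> 'I_n -> S) (t : int).
Hypothesis homog_A : forall i j, homog_int (b i - a j) (A i j).
Hypothesis homog_g : forall j, homog_int (a j) (g j).
Hypothesis idealE : forall p, I p <-> exists h : 'I_n -> S, p = \sum_j h j * g j.
Hypothesis syzygyE : forall h : 'I_n -> S, \sum_j h j * g j = 0 <->
  exists c : 'I_m -> S, forall j, h j = \sum_i c i * A i j.
Hypothesis A_inj : forall c : 'I_m -> S,
  (forall j, \sum_i c i * A i j = 0) -> forall i, c i = 0.

Local Notation ea := (fun j => t - a j).
Local Notation eb := (fun i => t - b i).
Local Notation et := (fun _ : 'I_1 => t).
Local Notation gens_mx := (forms_mx ea et (fun j _ => g j)).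
Local Notation syz_mx := (forms_mx eb ea A).

Let homog_g_shift j (l : 'I_1) : homog_int (t - (t - a j)) (g j).
Proof. by have -> : t - (t - a j) = a j by ring. Qed.

Let homog_A_shift i j : homog_int ((t - a j) - (t - b i)) (A i j).
Proof. by have -> : (t - a j) - (t - b i) = b i - a j by ring. Qed.

(* Membership and syzygy witnesses need not be homogeneous; taking the right
   homogeneous components ([hcomp]) turns them into witnesses in degree [t]. *)
Lemma ideal_coordsE p : homog_int t p -> I p <-> (coords1 t p <= gens_mx)%MS.
Proof.
move=> hp; split.
  case/idealE => h pE; apply/submxP; exists (coords ea (fun j => hcomp (ea j) (h j))).
  have hcompE := mul_forms_hcomp homog_g_shift (f := fun _ => p) (fun=> hp) (fun=> esym pE).
  rewrite mul_row_forms_mx; apply: eq_coords => l.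
  rewrite -(hcompE l) /mul_forms; apply: eq_bigr => j _.
  by rewrite coordsK // => j'; apply: homog_hcomp.
case/submxP => v; rewrite mul_row_forms_mx => /coords_inj E.
have := E (fun=> hp) (homog_mul_forms homog_g_shift (homog_forms_of_row v)) ord0.
by move=> ->; apply/idealE; exists (forms_of_row ea v).
Qed.

Lemma syz_mx_sub_kermx : (syz_mx <= kermx gens_mx)%MS.
Proof.
apply/sub_kermxP/row_matrixP => i; rewrite row_mul row0 rowE.
rewrite [_ *m syz_mx]mul_row_forms_mx mul_row_forms_mx -(coords0 et).
have homog_syz := homog_mul_forms homog_A_shift (homog_forms_of_row (e := eb) (delta_mx 0 i)).
apply: eq_coords => l; rewrite /mul_forms.
under eq_bigr => j _ do rewrite (coordsK homog_syz).
by apply/syzygyE; exists (forms_of_row eb (delta_mx 0 i)).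
Qed.

Lemma kermx_sub_syz_mx : (kermx gens_mx <= syz_mx)%MS.
Proof.
apply/row_subP => i; set u := row i (kermx gens_mx).
have : u *m gens_mx = 0 by rewrite /u -row_mul mulmx_ker row0.
rewrite mul_row_forms_mx -(coords0 et) => /coords_inj E.
have := E (homog_mul_forms homog_g_shift (homog_forms_of_row u)) (fun=> homog_int0 t) ord0.
case/syzygyE => c uE.
have hcompE := mul_forms_hcomp homog_A_shift (homog_forms_of_row u) (fun j => esym (uE j)).
apply/submxP; exists (coords eb (fun i => hcomp (eb i) (c i))).
rewrite mul_row_forms_mx -[LHS](forms_of_rowK u); apply: eq_coords => j.
rewrite -(hcompE j); apply: eq_bigr => i' _.
by rewrite coordsK // => i''; apply: homog_hcomp.
Qed.

Lemma row_free_syz_mx : row_free syz_mx.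
Proof.
apply: inj_row_free => w; rewrite mul_row_forms_mx -(coords0 ea) => /coords_inj E.
have := A_inj (E (homog_mul_forms homog_A_shift (homog_forms_of_row w)) (fun=> homog_int0 _)).
by move=> w0; rewrite -(forms_of_rowK w) -(coords0 eb); apply: eq_coords.
Qed.

Lemma HF_ncoords : (HF I t + ncoords ea = ncoords et + ncoords eb)%N.
Proof.
rewrite (HF_hf_is (hf_is_rank_compl ideal_coordsE)) mxrank_compl.
have := mxrank_ker gens_mx; have := rank_leq_row gens_mx; have := rank_leq_col gens_mx.
have /eqP <- : \rank syz_mx == \rank (kermx gens_mx).
  by rewrite eqn_leq !mxrankS ?syz_mx_sub_kermx ?kermx_sub_syz_mx.
by rewrite (eqP row_free_syz_mx); lia.
Qed.

End ResolutionInDegree.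

Lemma HF_resolution I m n a b g A : @graded_resolution I m n a b g A -> forall t,
  (HF I t + \sum_j nmonomials (t - a j) = nmonomials t + \sum_i nmonomials (t - b i))%N.
Proof.
case=> homog_A homog_g idealE syzygyE A_inj t.
by have := HF_ncoords t homog_A homog_g idealE syzygyE A_inj; rewrite !ncoordsE big_ord1.
Qed.

Lemma double_bin_diag2 k : (2 * 'C(k + 2, k) = (k + 1) * (k + 2))%N.
Proof.
elim: k => [|k IH] //.
rewrite (_ : (k.+1 + 2 = (k + 2).+1)%N) ?binS; last by lia.
rewrite (_ : (k + 2 = k.+2)%N) ?binSn in IH *; lia.
Qed.

Lemma double_nmonomials t : -2 <= t -> 2 * (nmonomials t)%:Z = (t + 1) * (t + 2).
Proof.
case: t => [k|k] ht; first by rewrite nmonomials_nat; have := double_bin_diag2 k; lia.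
by move: ht; rewrite NegzE; case: k => [|[|k]] //=; lia.
Qed.

Lemma double_sum_nmonomials n (f : 'I_n -> int) t : (forall j, f j <= t + 2) ->
  2 * \sum_j (nmonomials (t - f j))%:Z =
    n%:Z * ((t + 1) * (t + 2)) - (2 * t + 3) * \sum_j f j + \sum_j f j * f j.
Proof.
elim: n f => [|n IH] f hf; first by rewrite !big_ord0; ring.
rewrite !big_ord_recr /= mulrDr IH; last by move=> j; apply: hf.
rewrite double_nmonomials; last by have := hf ord_max; lia.
have -> : Posz n.+1 = Posz n + 1 by rewrite -addn1 PoszD.
ring.
Qed.

Lemma Posz_sum n (F : 'I_n -> nat) : Posz (\sum_j F j)%N = \sum_j Posz (F j).
Proof. by rewrite -natz natr_sum; apply: eq_bigr => j _; rewrite natz. Qed.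

Lemma HF_resolution_poly I m n a b g A t : @graded_resolution I m n a b g A ->
  -2 <= t -> (forall j, a j <= t + 2) -> (forall i, b i <= t + 2) ->
  2 * (HF I t)%:Z = (1 - n%:Z + m%:Z) * ((t + 1) * (t + 2))
     + (2 * t + 3) * (\sum_j a j - \sum_i b i) - \sum_j a j * a j + \sum_i b i * b i.
Proof.
move=> res ht ha hb; have := HF_resolution res t.
move/(congr1 (fun x => 2 * Posz x)); rewrite !PoszD !Posz_sum !mulrDr.
rewrite !double_sum_nmonomials // double_nmonomials // => E.
apply: (addIr (n%:Z * ((t + 1) * (t + 2)) - (2 * t + 3) * \sum_j a j + \sum_j a j * a j)).
by rewrite E; ring.
Qed.

(** * Consequences of an eventually constant Hilbert function *)

Definition HF_eventually_const (I : pred S) : Prop :=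
  exists (e : nat) (t0 : int), forall t : int, t0 <= t -> HF I t = e.

Lemma degZ_eq I e t0 : (forall t, t0 <= t -> HF I t = e) -> degZ I = e.
Proof.
move=> He; have [|t1 H1] := epsilon_spec (inhabits 0%N)
    (fun e => exists t0 : int, forall t : int, t0 <= t -> HF I t = e).
  by exists e, t0.
rewrite /degZ -(H1 (`|t0| + `|t1|)) ?He //; lia.
Qed.

Lemma eventually_const_quadratic (al be ga c T : int) :
  (forall t, T <= t -> al * ((t + 1) * (t + 2)) + (2 * t + 3) * be + ga = c) ->
  al = 0 /\ be = 0.
Proof.
move=> P.
have E0 := P T (lexx T).
have E1 := P (T + 1) ltac:(lia).
have E2 := P (T + 2) ltac:(lia).
have D1 : al * (2 * T + 4) + 2 * be = 0 by rewrite -(subrr c) -{1}E1 -E0; ring.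
have D2 : al * (2 * T + 6) + 2 * be = 0 by rewrite -(subrr c) -{1}E2 -E1; ring.
have : 2 * al = 0 by rewrite -(subrr 0) -{1}D2 -D1; ring.
lia.
Qed.

Lemma le_sum_norm n (f : 'I_n -> int) j : f j <= \sum_i `|f i|.
Proof.
rewrite (bigD1 j) //=; apply: le_trans (ler_norm _) _.
by rewrite lerDl; apply: sumr_ge0.
Qed.

Section EventuallyConstant.
Variables (I : pred S) (m n : nat) (a : 'I_n -> int) (b : 'I_m -> int).
Variables (g : 'I_n -> S) (A : 'I_m -> 'I_n -> S).
Hypotheses (res : graded_resolution I a b g A) (ev : HF_eventually_const I).

Let T := \sum_j `|a j| + \sum_i `|b i|.

Let HF_resolution_poly_large t : T <= t ->
  2 * (HF I t)%:Z = (1 - n%:Z + m%:Z) * ((t + 1) * (t + 2))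
     + (2 * t + 3) * (\sum_j a j - \sum_i b i) - \sum_j a j * a j + \sum_i b i * b i.
Proof.
have sa : 0 <= \sum_j `|a j| by apply: sumr_ge0.
have sb : 0 <= \sum_i `|b i| by apply: sumr_ge0.
rewrite /T => tT; apply: (HF_resolution_poly res).
- by lia.
- by move=> j; have := le_sum_norm a j; lia.
- by move=> i; have := le_sum_norm b i; lia.
Qed.

Lemma resolution_euler_char : n = m.+1 /\ \sum_j a j = \sum_i b i.
Proof.
have [e [t0 He]] := ev.
have [] := @eventually_const_quadratic (1 - n%:Z + m%:Z) (\sum_j a j - \sum_i b i)
  (- \sum_j a j * a j + \sum_i b i * b i) (2 * e%:Z) (`|T| + `|t0|).
  move=> t tT; rewrite -(He t); last by lia.
  by rewrite HF_resolution_poly_large; [ring | lia].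
by split; lia.
Qed.

Lemma HF_resolution_degZ t : -2 <= t -> (forall j, a j <= t + 2) ->
  (forall i, b i <= t + 2) -> HF I t = degZ I.
Proof.
move=> ht ha hb; have [e [t0 He]] := ev; rewrite (degZ_eq He).
have [n_eq sum_ab] := resolution_euler_char.
have chi0 : 1 - n%:Z + m%:Z = 0 by rewrite n_eq; lia.
have large : T <= `|T| + `|t0| by lia.
have := HF_resolution_poly_large large; rewrite He; last by lia.
have := HF_resolution_poly res ht ha hb.
by rewrite chi0 sum_ab subrr !mul0r !mulr0 !add0r; lia.
Qed.

End EventuallyConstant.

Lemma zero_ideal_resolution (I : pred S) : (forall p, I p <-> p = 0) ->
  graded_resolution I (fun j : 'I_0 => 0) (fun i : 'I_0 => 0) (fun=> 0) (fun _ _ => 0).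
Proof.
move=> idealE; split=> [[]//|[]//|p|h|c _ []//].
  by rewrite idealE; split=> [->|[h ->]]; [exists (fun=> 0) |]; rewrite big_ord0.
by rewrite big_ord0; split=> // _; exists (fun=> 0) => -[].
Qed.

Lemma zero_ideal_not_eventually_const (I : pred S) :
  (forall p, I p <-> p = 0) -> ~ HF_eventually_const I.
Proof. by move=> idealE /(resolution_euler_char (zero_ideal_resolution idealE)) []. Qed.

Lemma principal_ideal_resolution (I : pred S) e (g : S) : g != 0 -> homog_int e g ->
  (forall p, I p <-> exists q, p = q * g) ->
  graded_resolution I (fun=> e) (fun i : 'I_0 => 0) (fun _ : 'I_1 => g) (fun _ _ => 0).
Proof.
move=> g_neq0 homog_g idealE; split=> [[]//|//|p|h|c _ []//].
  rewrite idealE; split=> [[q ->]|[h ->]]; last by exists (h ord0); rewrite big_ord1.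
  by exists (fun=> q); rewrite big_ord1.
rewrite big_ord1; split=> [/eqP|[c ->]]; last by rewrite big_ord0 mul0r.
rewrite mulf_eq0 (negbTE g_neq0) orbF => /eqP h0.
by exists (fun=> 0) => j; rewrite (ord1 j) h0 big_ord0.
Qed.

Lemma principal_ideal_not_zero_dim (I : pred S) e (g : S) : g != 0 -> homog_int e g ->
  (forall p, I p <-> exists q, p = q * g) -> ~ I 1 -> ~ HF_eventually_const I.
Proof.
move=> g_neq0 homog_g idealE not_I1 ev.
have res := principal_ideal_resolution g_neq0 homog_g idealE.
have [_] := resolution_euler_char res ev; rewrite big_ord1 big_ord0 => e0.
move: homog_g; rewrite e0 => /homog0_polyC gE.
have c_neq0 : g@_0%MM != 0 by apply: contraNneq g_neq0 => c0; rewrite gE c0.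
by apply/not_I1/idealE; exists (g@_0%MM)^-1%:MP; rewrite {2}gE -mpolyCM mulVf.
Qed.

Section ZeroColumn.
Variables (I : pred S) (m n : nat) (a : 'I_n.+1 -> int) (b : 'I_m -> int).
Variables (g : 'I_n.+1 -> S) (A : 'I_m -> 'I_n.+1 -> S).
Hypotheses (res : graded_resolution I a b g A) (A_col0 : forall i, A i ord0 = 0).

Let delta0 (j : 'I_n.+1) : S := (j == ord0)%:R.

Lemma zero_column_gen_neq0 : g ord0 != 0.
Proof.
apply/eqP => g0; case: res => _ _ _ syzygyE _.
have sum0 : \sum_j delta0 j * g j = 0.
  by apply: big1 => j _; rewrite /delta0; case: eqP => [->|_]; rewrite ?g0 ?mulr0 ?mul0r.
have [c /(_ ord0)] := (syzygyE delta0).1 sum0.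
rewrite /delta0 eqxx big1 => [/eqP|i _]; last by rewrite A_col0 mulr0.
by rewrite oner_eq0.
Qed.

Lemma zero_column_gens_eq0 j : j != ord0 -> g j = 0.
Proof.
move=> j_neq0; case: res => _ _ _ syzygyE _.
pose h (l : 'I_n.+1) := if l == ord0 then g j else if l == j then - g ord0 else 0.
have sum0 : \sum_l h l * g l = 0.
  rewrite (bigD1 ord0) //= (bigD1 j) //= big1 => [|l /andP [/negbTE l0 /negbTE lj]].
    by rewrite /h eqxx (negbTE j_neq0) eqxx addr0 mulNr mulrC subrr.
  by rewrite /h l0 lj mul0r.
have [c /(_ ord0)] := (syzygyE h).1 sum0.
by rewrite /h eqxx => ->; apply: big1 => i _; rewrite A_col0 mulr0.
Qed.

Lemma zero_column_principal p : I p <-> exists q, p = q * g ord0.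
Proof.
case: res => _ _ idealE _ _; rewrite idealE; split=> [[h ->]|[q ->]].
  exists (h ord0); rewrite big_ord_recl big1 ?addr0 // => j _.
  by rewrite zero_column_gens_eq0 ?mulr0.
exists (fun l => if l == ord0 then q else 0); rewrite big_ord_recl /= big1 ?addr0 // => j _.
by rewrite mul0r.
Qed.

Lemma zero_column_not_zero_dim : ~ I 1 -> ~ HF_eventually_const I.
Proof.
case: (res) => _ homog_g _ _ _.
exact: principal_ideal_not_zero_dim zero_column_gen_neq0 (homog_g ord0) zero_column_principal.
Qed.

End ZeroColumn.

Lemma resolution_first_gen_deg_ge0 (I : pred S) m n (a : 'I_n.+1 -> int)
    (b : 'I_m -> int) g A :
  graded_resolution I a b g A -> HF_eventually_const I ->
  (forall j j' : 'I_n.+1, (j <= j')%N -> a j' <= a j) -> 0 <= a ord0.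
Proof.
move=> [_ homog_g idealE _ _] ev a_dec; rewrite leNgt; apply/negP => a0_lt0.
have g0 j : g j = 0.
  by apply: homog_int_neg (homog_g j); have := a_dec ord0 j (leq0n _); lia.
apply: (zero_ideal_not_eventually_const _ ev) => p; rewrite idealE.
split=> [[h ->]|->]; last by exists (fun=> 0); rewrite big1 // => j _; rewrite mul0r.
by apply: big1 => j _; rewrite g0 mulr0.
Qed.

Lemma resolution_first_gen_deg_le (I : pred S) m n (a : 'I_n.+1 -> int)
    (b : 'I_m.+1 -> int) g A :
  graded_resolution I a b g A -> HF_eventually_const I -> ~ I 1 ->
  (forall i i' : 'I_m.+1, (i <= i')%N -> b i' <= b i) -> a ord0 <= b ord0.
Proof.
move=> res ev not_I1 b_dec; rewrite leNgt; apply/negP => b0_lt_a0.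
apply: (zero_column_not_zero_dim res _ not_I1 ev) => i.
case: res => homog_A _ _ _ _; apply: homog_int_neg (homog_A i ord0).
by have := b_dec ord0 i (leq0n _); lia.
Qed.

Lemma mx_degree_row' k (M : 'M[int]_k.+1) (a : 'I_k.+1 -> int) (b : 'I_k -> int) :
  (forall i j, row' ord0 M i j = b i - a j) -> \sum_j a j = \sum_i b i ->
  mx_degree M = M ord0 ord0 + a ord0.
Proof.
move=> ME sum_ab.
have diagE (i : 'I_k) : M (lift ord0 i) (lift ord0 i) = b i - a (lift ord0 i).
  by rewrite -ME mxE.
rewrite /mx_degree big_ord_recl (eq_bigr _ (fun i _ => diagE i)) sumrB -sum_ab.
by rewrite big_ord_recl; ring.
Qed.

Theorem proposition5p8 (k : nat) (M : 'M[int]_k.+1) (I : pred S) :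
  homogeneous_mx M -> well_ordered_mx M ->
  zero_dim_scheme_ideal I -> is_dHB I (row' ord0 M) ->
  HF I (mx_degree M - 1) = degZ I.
Proof.
move=> _ wo [_ _ not_I1 ev] [a [b [g [A [a_dec [b_dec [ME [homog_A [homog_g idealE_syz]]]]]]]]].
have res : graded_resolution I a b g A by case: idealE_syz => idealE [syzygyE A_inj]; split.
destruct k as [|k].
  (* With no relations, I_Z is principal. *)
  by exfalso; apply: (zero_column_not_zero_dim res _ not_I1 ev) => -[].
have [_ sum_ab] := resolution_euler_char res ev.
have a0_ge0 := resolution_first_gen_deg_ge0 res ev a_dec.
have a0_le_b0 := resolution_first_gen_deg_le res ev not_I1 b_dec.
have m10_le_m00 : b ord0 - a ord0 <= M ord0 ord0.
  by rewrite -ME mxE; case: (wo ord0 (lift ord0 ord0) ord0 (lift ord0 ord0)).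
rewrite (mx_degree_row' ME sum_ab).
apply: (HF_resolution_degZ res ev) => [|j|i]; first by lia.
  by have := a_dec ord0 j (leq0n _); lia.
by have := b_dec ord0 i (leq0n _); lia.
Qed.
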